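(* Let $X$ and $Y$ be Banach spaces and $f\colon X\to Y$ a coarse map (i.e. $\omega_f(t)<\infty$ for all $t\ge0$). Then there exist an index set $I$, a nonprincipal ultrafilter $\mathcal U$ on $I$, and a map $F\colon X\to \ell_1(Y)^I/\mathcal U$ such that for all $x,y\in X$, $$\rho_f(\|x-y\|)\le\|F(x)-F(y)\|\le\omega_f(\|x-y\|)\quad\text{and}\quad \|F(x)-F(y)\|=\|F(x-y)\|.$$
   Context: $\omega_f(t)=\sup\{\|f(x)-f(y)\|:\|x-y\|\le t\}$, $\rho_f(t)=\inf\{\|f(x)-f(y)\|:\|x-y\|\ge t\}$. $\ell_1(Y)$ is the $\ell_1$-sum of countably many copies of $Y$. For a Banach space $Z$, an index set $I$ and a nonprincipal ultrafilter $\mathcal U$ on $I$, the ultrapower $Z^I/\mathcal U$ is the space of norm-bounded families $(z_i)_{i\in I}$ modulo $(z_i)\sim(w_i)$ iff $\lim_{i,\mathcal U}\|z_i-w_i\|=0$, with norm $\lim_{i,\mathcal U}\|z_i\|$. *)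

From Stdlib Require Import Reals Lra ClassicalEpsilon.
Open Scope R_scope.
Set Implicit Arguments.

Record NormedSpace : Type := {
  ns_car :> Type;
  ns_zero : ns_car;
  ns_add : ns_car -> ns_car -> ns_car;
  ns_opp : ns_car -> ns_car;
  ns_scal : R -> ns_car -> ns_car;
  ns_norm : ns_car -> R;
  ns_add_assoc : forall x y z, ns_add x (ns_add y z) = ns_add (ns_add x y) z;
  ns_add_comm : forall x y, ns_add x y = ns_add y x;
  ns_add_0 : forall x, ns_add x ns_zero = x;
  ns_add_opp : forall x, ns_add x (ns_opp x) = ns_zero;
  ns_scal_assoc : forall a b x, ns_scal a (ns_scal b x) = ns_scal (a * b) x;
  ns_scal_1 : forall x, ns_scal 1 x = x;
  ns_scal_distr_v : forall a x y, ns_scal a (ns_add x y) = ns_add (ns_scal a x) (ns_scal a y);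
  ns_scal_distr_s : forall a b x, ns_scal (a + b) x = ns_add (ns_scal a x) (ns_scal b x);
  ns_norm_eq0 : forall x, ns_norm x = 0 -> x = ns_zero;
  ns_norm_triangle : forall x y, ns_norm (ns_add x y) <= ns_norm x + ns_norm y;
  ns_norm_scal : forall a x, ns_norm (ns_scal a x) = Rabs a * ns_norm x
}.

Arguments ns_add {n}. Arguments ns_opp {n}. Arguments ns_scal {n}. Arguments ns_norm {n}.

Definition vsub {X : NormedSpace} (x y : X) : X := ns_add x (ns_opp y).
Definition ndist {X : NormedSpace} (x y : X) : R := ns_norm (vsub x y).

Definition Banach (X : NormedSpace) : Prop :=
  forall u : nat -> X,
    (forall eps, 0 < eps -> exists N, forall m n, (N <= m)%nat -> (N <= n)%nat ->
        ndist (u m) (u n) < eps) ->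
    exists l : X, forall eps, 0 < eps -> exists N, forall n, (N <= n)%nat ->
        ndist (u n) l < eps.

(** Supremum / infimum of a set of reals (the true sup/inf whenever it exists). *)
Definition Rsup (E : R -> Prop) : R :=
  epsilon (inhabits 0) (fun s => is_lub E s).
Definition Rinf (E : R -> Prop) : R := - Rsup (fun r => E (- r)).

Definition omega_set {X Y : NormedSpace} (f : X -> Y) (t : R) : R -> Prop :=
  fun r => exists x y : X, ndist x y <= t /\ r = ndist (f x) (f y).
Definition rho_set {X Y : NormedSpace} (f : X -> Y) (t : R) : R -> Prop :=
  fun r => exists x y : X, ndist x y >= t /\ r = ndist (f x) (f y).
Definition omega_f {X Y : NormedSpace} (f : X -> Y) (t : R) : R := Rsup (omega_set f t).
Definition rho_f {X Y : NormedSpace} (f : X -> Y) (t : R) : R := Rinf (rho_set f t).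

Definition coarse {X Y : NormedSpace} (f : X -> Y) : Prop :=
  forall t, 0 <= t -> bound (omega_set f t).

Definition summable (a : nat -> R) : Prop :=
  exists l, Un_cv (fun n => sum_f_R0 a n) l.
Definition series_sum (a : nat -> R) : R :=
  epsilon (inhabits 0) (fun l => Un_cv (fun n => sum_f_R0 a n) l).

Definition l1 (Y : NormedSpace) : Type :=
  { s : nat -> Y | summable (fun n => ns_norm (s n)) }.
Definition l1_norm {Y : NormedSpace} (s : l1 Y) : R :=
  series_sum (fun n => ns_norm (proj1_sig s n)).
Definition l1_dist {Y : NormedSpace} (s t : l1 Y) : R :=
  series_sum (fun n => ndist (proj1_sig s n) (proj1_sig t n)).

Definition ultrafilter {I : Type} (U : (I -> Prop) -> Prop) : Prop :=
  U (fun _ => True) /\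
  ~ U (fun _ => False) /\
  (forall A B : I -> Prop, U A -> (forall i, A i -> B i) -> U B) /\
  (forall A B : I -> Prop, U A -> U B -> U (fun i => A i /\ B i)) /\
  (forall A : I -> Prop, U A \/ U (fun i => ~ A i)).
Definition nonprincipal {I : Type} (U : (I -> Prop) -> Prop) : Prop :=
  forall i0 : I, ~ U (fun i => i = i0).

Definition ulim {I : Type} (U : (I -> Prop) -> Prop) (a : I -> R) (L : R) : Prop :=
  forall eps, 0 < eps -> U (fun i => Rabs (a i - L) < eps).

(** A family (z_i) in l_1(Y)^I is norm-bounded (an element of the ultrapower). *)
Definition l1_bounded_family {I : Type} {Y : NormedSpace} (z : I -> l1 Y) : Prop :=
  exists M, forall i, l1_norm (z i) <= M.

(* The map sends z to the l1-vector of increments a |-> f (z + a) - f a, weighted by the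
   uniform probability on a discrete box B(G,N) = {k_1 y_1 + ... + k_m y_m : 0 <= k_j <= N}
   spanned by a finite list G = [y_1; ...; y_m].  Then ||F x - F y|| is the average over
   the box of ||f (x + a) - f (y + a)||, which lies between rho_f(||x - y||) and
   omega_f(||x - y||), while ||F (x - y)|| is the average of ||f (x - y + a) - f a||: the
   same function translated by y.  If y is in G, averaging over B(G,N) is invariant under
   translation by y up to 2 omega_f(||x - y||) / (N + 1), so both quantities have the same
   limit along an ultrafilter on the pairs (G, N) that refines the order by inclusion and size. *)
From Stdlib Require Import Reals.
Open Scope R_scope.
From mathcomp Require all_boot classical_sets filter boolp.

Module UltrafilterExistence.
From HB Require Import structures.
From mathcomp Require Import all_boot classical_sets filter boolp.

Lemma ultrafilter_of_directed (I J : Type) (P : J -> I -> Prop) (j0 : J)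
  (Pne : forall j, exists i, P j i)
  (Pdir : forall j1 j2, exists j3, forall i, P j3 i -> P j1 i /\ P j2 i) :
  exists U : (I -> Prop) -> Prop, ultrafilter U /\ forall j, U (P j).
Proof.
pose F : set_system I := fun A => exists j, forall i, P j i -> A i.
have FF : ProperFilter F.
  apply: Build_ProperFilter_ex.
    move=> A [j Hj]; have [i Pi] := Pne j; exists i; exact: Hj.
  split.
  - by exists j0.
  - move=> A B [j1 H1] [j2 H2]; have [j3 H3] := Pdir j1 j2.
    by exists j3 => i /H3 [/H1 ? /H2 ?].
  - by move=> A B AB [j H]; exists j => i /H /AB.
have [G [UG FG]] := ultraFilterLemma FF.
have GF : Filter G by case: UG => -[].
exists G; split; last by move=> j; apply: FG; exists j.
split; first exact: filterT.
split; first by have := @filter_not_empty _ G (@ultra_proper _ _ UG).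
split; first by move=> A B GA AB; exact: (filterS AB).
split; first by move=> A B GA GB; exact: filterI.
by move=> A; exact: in_ultra_setVsetC.
Qed.
End UltrafilterExistence.

From Stdlib Require Import Lra Lia List FunctionalExtensionality ClassicalEpsilon Classical.
Import ListNotations.
Set Bullet Behavior "Strict Subproofs".

Lemma refining_ultrafilter (T : Type) :
  exists U : (list T * nat -> Prop) -> Prop,
    ultrafilter U /\ nonprincipal U /\
    forall G n, U (fun i => incl G (fst i) /\ (n <= snd i)%nat).
Proof.
  set (P := fun (j i : list T * nat) => incl (fst j) (fst i) /\ (snd j <= snd i)%nat).
  destruct (UltrafilterExistence.ultrafilter_of_directed _ _ P ([], 0%nat)) as [U [HU HUP]].
  - intros j; exists j; split; [apply incl_refl | lia].
  - intros [G1 n1] [G2 n2]; exists (G1 ++ G2, max n1 n2).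
    intros [G N] [HG HN]; repeat split; cbn [fst snd] in *; try lia;
      intros z Hz; apply HG, in_or_app; auto.
  - exists U; split; [exact HU|]; split; [|intros G n; exact (HUP (G, n))].
    destruct HU as [_ [Hempty [Hmono [Hand _]]]].
    intros i0 Hi0; apply Hempty.
    apply (Hmono _ _ (Hand _ _ Hi0 (HUP ([], S (snd i0))))).
    intros i [-> [_ Hn]]; simpl in Hn; lia.
Qed.

Lemma ulim_exists {I : Type} (U : (I -> Prop) -> Prop) (a : I -> R) m M :
  ultrafilter U -> (forall i, m <= a i <= M) -> exists L, ulim U a L /\ m <= L <= M.
Proof.
  intros [UT [UF [US [UI UU]]]] Ha.
  set (S := fun t => U (fun i => t <= a i)).
  assert (Sm : S m) by (apply (US _ _ UT); intros i _; apply Ha).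
  assert (SM : forall t, S t -> t <= M).
  { intros t St; destruct (Rle_dec t M) as [|Ht]; [assumption|].
    exfalso; apply UF, (US _ _ St); intros i Hi; pose proof (Ha i); lra. }
  destruct (completeness S) as [L [HLub HLleast]];
    [exists M; intros t St; apply SM, St | exists m; exact Sm |].
  exists L; split; [|split; [apply HLub, Sm | apply HLleast; intros t St; apply SM, St]].
  intros eps He.
  assert (Hbelow : U (fun i => L - eps < a i)).
  { destruct (classic (exists t, S t /\ L - eps < t)) as [[t [St Ht]]|Hn].
    - apply (US _ _ St); intros i Hi; lra.
    - exfalso; assert (L <= L - eps); [|lra].
      apply HLleast; intros t St; destruct (Rle_dec t (L - eps)); [assumption|].
      exfalso; apply Hn; exists t; split; [assumption | lra]. }
  assert (Habove : U (fun i => a i < L + eps)).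
  { destruct (UU (fun i => L + eps / 2 <= a i)) as [H|H].
    - exfalso; assert (L + eps / 2 <= L) by (apply HLub; exact H); lra.
    - apply (US _ _ H); intros i Hi; lra. }
  apply (US _ _ (UI _ _ Hbelow Habove)); intros i [H1 H2]; apply Rabs_def1; lra.
Qed.

Lemma ulim_close {I : Type} (U : (I -> Prop) -> Prop) (a b : I -> R) L :
  ultrafilter U -> ulim U a L ->
  (forall eps, 0 < eps -> U (fun i => Rabs (a i - b i) < eps)) -> ulim U b L.
Proof.
  intros [_ [_ [US [UI _]]]] Ha Hab eps He.
  apply (US _ _ (UI _ _ (Ha (eps / 2) ltac:(lra)) (Hab (eps / 2) ltac:(lra)))).
  intros i [H1 H2]; replace (b i - L) with ((a i - L) - (a i - b i)) by ring.
  eapply Rle_lt_trans; [apply Rabs_triang|]; rewrite Rabs_Ropp; lra.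
Qed.

Lemma Rsup_upper_bound (E : R -> Prop) r : bound E -> E r -> r <= Rsup E.
Proof.
  intros Hb Er; unfold Rsup.
  assert (Hlub : is_lub E (epsilon (inhabits 0) (fun s => is_lub E s))).
  { apply epsilon_spec; destruct (completeness E) as [s Hs];
      [exact Hb | exists r; exact Er | exists s; exact Hs]. }
  apply Hlub, Er.
Qed.

Lemma Rinf_lower_bound (E : R -> Prop) r : (forall s, E s -> 0 <= s) -> E r -> Rinf E <= r.
Proof.
  intros Hpos Er; unfold Rinf.
  assert (- r <= Rsup (fun s => E (- s))); [|lra].
  apply Rsup_upper_bound; [exists 0; intros s Es; pose proof (Hpos _ Es); lra|].
  rewrite Ropp_involutive; exact Er.
Qed.

Lemma inv_succ_eventually_lt (c eps : R) : 0 <= c -> 0 < eps ->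
  exists n0, forall N, (n0 <= N)%nat -> c / INR (S N) < eps.
Proof.
  intros Hc Heps.
  destruct (archimed_cor1 (eps / (c + 1))) as [n0 [Hn0 Hpos]];
    [apply Rdiv_lt_0_compat; lra|].
  exists n0; intros N HN.
  assert (Hn0pos : 0 < INR n0) by (apply lt_0_INR; exact Hpos).
  assert (HnN : INR n0 <= INR (S N)) by (apply le_INR; lia).
  assert (Hn0eps : c + 1 < eps * INR n0).
  { apply (Rmult_lt_compat_r (INR n0 * (c + 1))) in Hn0; [|nra].
    replace (/ INR n0 * (INR n0 * (c + 1))) with (c + 1) in Hn0 by (field; lra).
    replace (eps / (c + 1) * (INR n0 * (c + 1))) with (eps * INR n0) in Hn0 by (field; lra).
    exact Hn0. }
  apply Rmult_lt_reg_r with (INR (S N)); [lra|].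
  unfold Rdiv; rewrite Rmult_assoc, Rinv_l by lra; nra.
Qed.

Section NormedSpaceAlgebra.
Context {V : NormedSpace}.
Declare Scope ns_scope.
Local Notation "a + b" := (ns_add a b) : ns_scope.
Local Notation "- a" := (ns_opp a) : ns_scope.
Local Notation O := (ns_zero V).
Local Open Scope ns_scope.

Lemma ns_add0l (x : V) : O + x = x.
Proof. rewrite ns_add_comm; apply ns_add_0. Qed.

Lemma ns_addNl (x : V) : - x + x = O.
Proof. rewrite ns_add_comm; apply ns_add_opp. Qed.

Lemma ns_addCA (z w a : V) : z + (w + a) = w + (z + a).
Proof. rewrite !ns_add_assoc, (ns_add_comm _ z); reflexivity. Qed.

Lemma ns_addI (a x y : V) : a + x = a + y -> x = y.
Proof.
  intros H; rewrite <- (ns_add0l x), <- (ns_add0l y), <- (ns_addNl a), <- !ns_add_assoc, H.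
  reflexivity.
Qed.

Lemma ns_opp_unique (x y : V) : x + y = O -> y = - x.
Proof. intros H; apply (ns_addI x); rewrite H, ns_add_opp; reflexivity. Qed.

Lemma ns_oppK (x : V) : - - x = x.
Proof. symmetry; apply ns_opp_unique, ns_addNl. Qed.

Lemma ns_oppD (x y : V) : - (x + y) = - x + - y.
Proof.
  symmetry; apply ns_opp_unique.
  rewrite (ns_add_comm _ (- x)), ns_add_assoc, <- (ns_add_assoc _ x y), ns_add_opp, ns_add_0,
    ns_add_opp.
  reflexivity.
Qed.

Lemma ns_scal0l (x : V) : ns_scal 0 x = O.
Proof.
  apply (ns_addI (ns_scal 0 x)).
  rewrite <- ns_scal_distr_s, Rplus_0_r, ns_add_0; reflexivity.
Qed.

Lemma ns_scal0r (a : R) : ns_scal a O = O.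
Proof. rewrite <- (ns_scal0l O), ns_scal_assoc, Rmult_0_r; reflexivity. Qed.

Lemma ns_scalN (a : R) (x : V) : ns_scal a (- x) = - ns_scal a x.
Proof. apply ns_opp_unique; rewrite <- ns_scal_distr_v, ns_add_opp; apply ns_scal0r. Qed.

Lemma ns_norm0 : ns_norm O = 0.
Proof. rewrite <- (ns_scal0l O), ns_norm_scal, Rabs_R0; ring. Qed.

Lemma ns_normN (x : V) : ns_norm (- x) = ns_norm x.
Proof.
  replace (- x) with (ns_scal (-1) x).
  - rewrite ns_norm_scal, Rabs_left by lra; ring.
  - apply ns_opp_unique; rewrite <- (ns_scal_1 _ x) at 1.
    rewrite <- ns_scal_distr_s, Rplus_opp_r; apply ns_scal0l.
Qed.

Lemma ns_norm_ge0 (x : V) : 0 <= ns_norm x.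
Proof.
  pose proof (ns_norm_triangle _ x (- x)) as H.
  rewrite ns_add_opp, ns_norm0, ns_normN in H; lra.
Qed.

Lemma ndist_ge0 (x y : V) : 0 <= ndist x y.
Proof. apply ns_norm_ge0. Qed.

Lemma vsub_add_cancel (x y a : V) : vsub x y + (y + a) = x + a.
Proof.
  unfold vsub; rewrite <- ns_add_assoc, (ns_add_assoc _ (- y)), ns_addNl, ns_add0l.
  reflexivity.
Qed.

Lemma vsub_add2r (x y a : V) : vsub (x + a) (y + a) = vsub x y.
Proof.
  unfold vsub; rewrite ns_oppD, (ns_add_comm _ (- y)), ns_add_assoc, <- (ns_add_assoc _ x a),
    ns_add_opp, ns_add_0.
  reflexivity.
Qed.

Lemma ndist_add2r (x y a : V) : ndist (x + a) (y + a) = ndist x y.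
Proof. unfold ndist; rewrite vsub_add2r; reflexivity. Qed.

Lemma ndist_addK (x a : V) : ndist (x + a) a = ns_norm x.
Proof. unfold ndist, vsub; rewrite <- ns_add_assoc, ns_add_opp, ns_add_0; reflexivity. Qed.

Lemma vsub_sub2r (u v c : V) : vsub (vsub u c) (vsub v c) = vsub u v.
Proof.
  unfold vsub; rewrite ns_oppD, ns_oppK, (ns_add_comm _ (- v)), ns_add_assoc,
    <- (ns_add_assoc _ u), ns_addNl, ns_add_0.
  reflexivity.
Qed.

Lemma vsub_scal (a : R) (p q : V) : vsub (ns_scal a p) (ns_scal a q) = ns_scal a (vsub p q).
Proof. unfold vsub; rewrite ns_scal_distr_v, ns_scalN; reflexivity. Qed.

Lemma ns_add_scal_succ (k : nat) (y a : V) :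
  y + (ns_scal (INR k) y + a) = ns_scal (INR (S k)) y + a.
Proof.
  rewrite S_INR, ns_scal_distr_s, ns_scal_1, ns_add_assoc, (ns_add_comm _ y); reflexivity.
Qed.

End NormedSpaceAlgebra.

Definition lsum (l : list R) : R := fold_right Rplus 0 l.

Lemma lsum_app l1 l2 : lsum (l1 ++ l2) = lsum l1 + lsum l2.
Proof. induction l1 as [|r l1 IH]; simpl; [ring | rewrite IH; ring]. Qed.

Lemma lsum_map_scal {T} (c : R) (g : T -> R) (l : list T) :
  lsum (map (fun p => c * g p) l) = c * lsum (map g l).
Proof. induction l as [|p l IH]; simpl; [ring | rewrite IH; ring]. Qed.

Lemma lsum_flat_map_seq {T} (phi : T -> R) (F : nat -> list T) (N : nat) :
  lsum (map phi (flat_map F (seq 0 (S N)))) = sum_f_R0 (fun k => lsum (map phi (F k))) N.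
Proof.
  induction N as [|N IH].
  - simpl; rewrite app_nil_r; reflexivity.
  - rewrite seq_S, flat_map_app, map_app, lsum_app, IH; simpl; rewrite app_nil_r; reflexivity.
Qed.

Lemma sum_f_R0_telescope (g : nat -> R) N :
  sum_f_R0 (fun k => g (S k) - g k) N = g (S N) - g 0%nat.
Proof. induction N as [|N IH]; simpl; [ring | rewrite IH; ring]. Qed.

Lemma series_of_list {T} (l : list T) (d : T) (psi : T -> R) : psi d = 0 ->
  summable (fun n => psi (nth n l d)) /\
  series_sum (fun n => psi (nth n l d)) = lsum (map psi l).
Proof.
  intros Hd; set (u := fun n => psi (nth n l d)).
  assert (Hpartial : forall n, (length l <= n)%nat -> sum_f_R0 u n = lsum (map psi l)).
  { assert (Hlen : sum_f_R0 u (length l) = lsum (map psi l)).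
    { unfold u; induction l as [|p l IH]; [simpl; exact Hd|].
      change (length (p :: l)) with (S (length l)).
      rewrite (decomp_sum _ (S (length l))) by lia; simpl pred; cbn [nth].
      rewrite IH; reflexivity. }
    intros n Hn; induction Hn as [|n Hn IH]; [exact Hlen|].
    simpl; rewrite IH; unfold u; rewrite nth_overflow by lia; rewrite Hd; ring. }
  assert (Hcv : Un_cv (fun n => sum_f_R0 u n) (lsum (map psi l))).
  { intros eps He; exists (length l); intros n Hn.
    rewrite Hpartial by lia; rewrite R_dist_eq; exact He. }
  split; [exists (lsum (map psi l)); exact Hcv|].
  unfold series_sum; apply (UL_sequence (fun n => sum_f_R0 u n)); [|exact Hcv].
  apply epsilon_spec; exists (lsum (map psi l)); exact Hcv.
Qed.

Section Boxes.
Context {X : NormedSpace}.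

(* [box_avg G N h] averages [h] over [k_1 y_1 + ... + k_m y_m], [0 <= k_j <= N], where
   [G = [y_1; ...; y_m]]; [box_nodes G N] lists the same points with their weights. *)
Fixpoint box_avg (G : list X) (N : nat) (h : X -> R) : R :=
  match G with
  | [] => h (ns_zero X)
  | y :: G' =>
      / INR (S N) * sum_f_R0 (fun k => box_avg G' N (fun a => h (ns_add (ns_scal (INR k) y) a))) N
  end.

Fixpoint box_nodes (G : list X) (N : nat) : list (R * X) :=
  match G with
  | [] => [(1, ns_zero X)]
  | y :: G' =>
      flat_map (fun k => map (fun p => (/ INR (S N) * fst p, ns_add (ns_scal (INR k) y) (snd p)))
                             (box_nodes G' N))
               (seq 0 (S N))
  end.

Lemma INR_succ_gt0 N : 0 < INR (S N).
Proof. apply lt_0_INR; lia. Qed.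

Lemma box_avg_nodes G N h :
  box_avg G N h = lsum (map (fun p => fst p * h (snd p)) (box_nodes G N)).
Proof.
  revert h; induction G as [|y G IH]; intros h; [simpl; ring|].
  cbn [box_nodes box_avg]; rewrite lsum_flat_map_seq, scal_sum.
  apply sum_eq; intros k _; rewrite map_map, IH, Rmult_comm, <- lsum_map_scal.
  f_equal; apply map_ext; intros p; simpl; ring.
Qed.

Lemma box_nodes_weight_ge0 G N p : In p (box_nodes G N) -> 0 <= fst p.
Proof.
  revert p; induction G as [|y G IH]; intros p Hp.
  - destruct Hp as [<-|[]]; simpl; lra.
  - cbn [box_nodes] in Hp; apply in_flat_map in Hp; destruct Hp as [k [_ Hk]].
    apply in_map_iff in Hk; destruct Hk as [q [<- Hq]]; cbn [fst].
    apply Rmult_le_pos; [left; apply Rinv_0_lt_compat, INR_succ_gt0 | apply IH, Hq].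
Qed.

Lemma box_avg_le G N h g : (forall a, h a <= g a) -> box_avg G N h <= box_avg G N g.
Proof.
  revert h g; induction G as [|y G IH]; intros h g Hhg; cbn [box_avg]; [apply Hhg|].
  apply Rmult_le_compat_l; [left; apply Rinv_0_lt_compat, INR_succ_gt0|].
  apply sum_Rle; intros k _; apply IH; intros a; apply Hhg.
Qed.

Lemma box_avg_const G N c : box_avg G N (fun _ => c) = c.
Proof.
  induction G as [|y G IH]; cbn [box_avg]; [reflexivity|].
  rewrite (sum_eq _ (fun _ => c)) by (intros; apply IH).
  rewrite sum_cte; field; apply Rgt_not_eq, INR_succ_gt0.
Qed.

Lemma box_avg_bounds G N h m M : (forall a, m <= h a <= M) -> m <= box_avg G N h <= M.
Proof.
  intros H; rewrite <- (box_avg_const G N m) at 1; rewrite <- (box_avg_const G N M).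
  split; apply box_avg_le; intros a; apply H.
Qed.

Lemma box_avg_abs_le G N h M : (forall a, Rabs (h a) <= M) -> Rabs (box_avg G N h) <= M.
Proof.
  intros H; apply Rabs_le, box_avg_bounds; intros a.
  pose proof (H a) as Ha; pose proof (Rle_abs (h a)); pose proof (Rle_abs (- h a)).
  rewrite Rabs_Ropp in *; lra.
Qed.

(* Translating by the first generator [y] telescopes the sum over [k]; translating by a
   later generator is handled inside each slice by induction. *)
Lemma box_avg_shift N G h M z : (forall a, Rabs (h a) <= M) -> In z G ->
  Rabs (box_avg G N (fun a => h (ns_add z a)) - box_avg G N h) <= 2 * M / INR (S N).
Proof.
  pose proof (INR_succ_gt0 N) as HN.
  revert h; induction G as [|y G IH]; intros h HM Hz; [destruct Hz|].
  cbn [box_avg]; rewrite <- Rmult_minus_distr_l, <- minus_sum, Rabs_mult,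
    Rabs_right by (left; apply Rinv_0_lt_compat, HN).
  unfold Rdiv; rewrite (Rmult_comm (2 * M)).
  apply Rmult_le_compat_l; [left; apply Rinv_0_lt_compat, HN|].
  set (slice := fun k => box_avg G N (fun a => h (ns_add (ns_scal (INR k) y) a))).
  destruct Hz as [<-|Hz].
  - rewrite (sum_eq _ (fun k => slice (S k) - slice k)).
    2:{ intros k _; unfold slice; do 2 f_equal.
        apply functional_extensionality; intros a; rewrite ns_add_scal_succ; reflexivity. }
    rewrite sum_f_R0_telescope.
    assert (Hslice : forall k, Rabs (slice k) <= M)
      by (intros k; apply box_avg_abs_le; intros a; apply HM).
    eapply Rle_trans; [apply Rabs_triang|]; rewrite Rabs_Ropp.
    pose proof (Hslice (S N)); pose proof (Hslice 0%nat); lra.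
  - eapply Rle_trans; [apply sum_f_R0_triangle|].
    eapply Rle_trans; [apply (sum_Rle _ (fun _ => 2 * M / INR (S N)))|].
    + intros k _; unfold slice.
      replace (fun a => h (ns_add z (ns_add (ns_scal (INR k) y) a)))
        with (fun a => (fun b => h (ns_add (ns_scal (INR k) y) b)) (ns_add z a))
        by (apply functional_extensionality; intros a; rewrite ns_addCA; reflexivity).
      apply (IH (fun b => h (ns_add (ns_scal (INR k) y) b))); [intros a; apply HM | exact Hz].
    + rewrite sum_cte; right; field; lra.
Qed.

End Boxes.

Section IncrementVectors.
Context {X Y : NormedSpace} (f : X -> Y).

Definition weighted_increment (z : X) (p : R * X) : Y :=
  ns_scal (fst p) (vsub (f (ns_add z (snd p))) (f (snd p))).

Definition null_node : R * X := (0, ns_zero X).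

Lemma weighted_increment_null z : ns_norm (weighted_increment z null_node) = 0.
Proof. unfold weighted_increment; simpl; rewrite ns_norm_scal, Rabs_R0; ring. Qed.

Lemma ndist_weighted_increment x y p :
  ndist (weighted_increment x p) (weighted_increment y p)
  = Rabs (fst p) * ndist (f (ns_add x (snd p))) (f (ns_add y (snd p))).
Proof. unfold weighted_increment, ndist; rewrite vsub_scal, vsub_sub2r, ns_norm_scal; reflexivity. Qed.

Definition increment_vector (G : list X) (N : nat) (z : X) : l1 Y :=
  exist _ (fun n => weighted_increment z (nth n (box_nodes G N) null_node))
    (proj1 (series_of_list (box_nodes G N) null_node (fun p => ns_norm (weighted_increment z p))
              (weighted_increment_null z))).

Lemma increment_vector_norm G N z :
  l1_norm (increment_vector G N z) = box_avg G N (fun a => ndist (f (ns_add z a)) (f a)).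
Proof.
  unfold l1_norm; simpl proj1_sig.
  rewrite (proj2 (series_of_list (box_nodes G N) null_node
                    (fun p => ns_norm (weighted_increment z p)) (weighted_increment_null z))),
    box_avg_nodes.
  f_equal; apply map_ext_in; intros p Hp.
  unfold weighted_increment; rewrite ns_norm_scal, Rabs_pos_eq
    by exact (box_nodes_weight_ge0 G N p Hp).
  reflexivity.
Qed.

Lemma increment_vector_dist G N x y :
  l1_dist (increment_vector G N x) (increment_vector G N y)
  = box_avg G N (fun a => ndist (f (ns_add x a)) (f (ns_add y a))).
Proof.
  unfold l1_dist; simpl proj1_sig.
  assert (Hnull : ndist (weighted_increment x null_node) (weighted_increment y null_node) = 0)
    by (rewrite ndist_weighted_increment; simpl; rewrite Rabs_R0; ring).
  rewrite (proj2 (series_of_list (box_nodes G N) null_node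
             (fun p => ndist (weighted_increment x p) (weighted_increment y p)) Hnull)),
    box_avg_nodes.
  f_equal; apply map_ext_in; intros p Hp.
  rewrite ndist_weighted_increment, Rabs_pos_eq by exact (box_nodes_weight_ge0 G N p Hp).
  reflexivity.
Qed.

Lemma rho_f_le t a b : ndist a b >= t -> rho_f f t <= ndist (f a) (f b).
Proof.
  intros Hab; apply Rinf_lower_bound.
  - intros s [u [v [_ ->]]]; apply ndist_ge0.
  - exists a, b; split; [exact Hab | reflexivity].
Qed.

Hypothesis f_coarse : coarse f.

Lemma omega_f_ge t a b : ndist a b <= t -> ndist (f a) (f b) <= omega_f f t.
Proof.
  intros Hab; apply Rsup_upper_bound.
  - apply f_coarse; pose proof (ndist_ge0 a b); lra.
  - exists a, b; split; [exact Hab | reflexivity].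
Qed.

Lemma increment_vector_norm_le G N z : l1_norm (increment_vector G N z) <= omega_f f (ns_norm z).
Proof.
  rewrite increment_vector_norm; apply (box_avg_bounds G N _ 0); intros a.
  split; [apply ndist_ge0 | apply omega_f_ge; rewrite ndist_addK; lra].
Qed.

Lemma increment_vector_dist_bounds G N x y :
  rho_f f (ndist x y) <= l1_dist (increment_vector G N x) (increment_vector G N y)
  <= omega_f f (ndist x y).
Proof.
  rewrite increment_vector_dist; apply box_avg_bounds; intros a.
  split; [apply rho_f_le | apply omega_f_ge]; rewrite ndist_add2r; lra.
Qed.

(* [f (x + a) - f (y + a)] is the increment of [x - y] at [y + a]. *)
Lemma increment_vector_sub_close G N x y : In y G ->
  Rabs (l1_dist (increment_vector G N x) (increment_vector G N y)
        - l1_norm (increment_vector G N (vsub x y)))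
  <= 2 * omega_f f (ndist x y) / INR (S N).
Proof.
  intros Hy; rewrite increment_vector_dist, increment_vector_norm.
  set (h := fun a => ndist (f (ns_add (vsub x y) a)) (f a)).
  replace (fun a => ndist (f (ns_add x a)) (f (ns_add y a))) with (fun a => h (ns_add y a))
    by (apply functional_extensionality; intros a; unfold h; rewrite vsub_add_cancel;
        reflexivity).
  apply box_avg_shift; [|exact Hy].
  intros a; unfold h; rewrite Rabs_pos_eq by apply ndist_ge0.
  apply omega_f_ge; rewrite ndist_addK; unfold ndist; lra.
Qed.

Lemma increment_vector_sub_eventually_close (U : (list X * nat -> Prop) -> Prop)
  (HU : ultrafilter U) (HUref : forall G n, U (fun i => incl G (fst i) /\ (n <= snd i)%nat))
  x y eps : 0 < eps ->
  U (fun i => Rabs (l1_dist (increment_vector (fst i) (snd i) x) (increment_vector (fst i) (snd i) y)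
                    - l1_norm (increment_vector (fst i) (snd i) (vsub x y))) < eps).
Proof.
  intros Heps.
  assert (Homega : 0 <= omega_f f (ndist x y))
    by (eapply Rle_trans; [apply (ndist_ge0 (f x) (f y)) | apply omega_f_ge; lra]).
  destruct (inv_succ_eventually_lt (2 * omega_f f (ndist x y)) eps ltac:(lra) Heps)
    as [n0 Hn0].
  destruct HU as [_ [_ [Hmono _]]].
  apply (Hmono _ _ (HUref [y] n0)); intros [G N] [HG HN]; cbn [fst snd] in *.
  eapply Rle_lt_trans; [|apply Hn0, HN].
  exact (increment_vector_sub_close G N x y (HG y (or_introl eq_refl))).
Qed.

End IncrementVectors.

Theorem theorem3p1 (X Y : NormedSpace) (HX : Banach X) (HY : Banach Y)
  (f : X -> Y) (Hf : coarse f) :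
  exists (I : Type) (U : (I -> Prop) -> Prop),
    ultrafilter U /\ nonprincipal U /\
    exists F : X -> I -> l1 Y,
      (forall x, l1_bounded_family (F x)) /\
      forall x y : X,
        exists L : R,
          ulim U (fun i => l1_dist (F x i) (F y i)) L /\
          rho_f f (ndist x y) <= L <= omega_f f (ndist x y) /\
          ulim U (fun i => l1_norm (F (vsub x y) i)) L.
Proof.
  destruct (refining_ultrafilter X) as [U [HU [HUnp HUref]]].
  exists (list X * nat)%type, U; split; [exact HU|]; split; [exact HUnp|].
  exists (fun z i => increment_vector f (fst i) (snd i) z); split.
  { intros x; exists (omega_f f (ns_norm x)); intros i; exact (increment_vector_norm_le f Hf _ _ x). }
  intros x y.
  destruct (ulim_exists U _ (rho_f f (ndist x y)) (omega_f f (ndist x y)) HU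
              (fun i => increment_vector_dist_bounds f Hf (fst i) (snd i) x y)) as [L [HL HLb]].
  exists L; split; [exact HL|]; split; [exact HLb|].
  exact (ulim_close U _ _ L HU HL (increment_vector_sub_eventually_close f Hf U HU HUref x y)).
Qed.
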